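(* Let $X=(X(t),t\in\mathbb{R}^d)$ be a real-valued centered isotropic Gaussian random field with continuous sample paths, whose covariance is $\mathrm{Cov}(X(s),X(t))=R_X(\|t-s\|)$ with $R_X:[0,\infty)\to\mathbb{R}$ nonincreasing. Then for any $a,b\in\mathbb{R}^d$, the straight-line path $\xi(u)=a+u(b-a)$, $0\le u\le1$, attains the supremum $$\sup_{\xi\in\mathcal{P}(a,b)}\ \min_{\mu\in M_1^+([0,1])}\int_0^1\!\!\int_0^1R_X(\|\xi(u)-\xi(v)\|)\,\mu(du)\mu(dv).$$
   Context: $\mathcal{P}(a,b)$ is the set of continuous maps $\xi:[0,1]\to\mathbb{R}^d$ with $\xi(0)=a$, $\xi(1)=b$. $M_1^+([0,1])$ is the set of Borel probability measures on $[0,1]$. (The reciprocal of this supremum is the exponent $C_X(a,b)$ in $\lim_{u\to\infty}u^{-2}\log P(\exists\,\xi\in\mathcal{P}(a,b): X(\xi(v))>u\ \forall v)=-\frac12C_X(a,b)$.) *)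

From HB Require Import structures.
From mathcomp Require Import all_boot all_order all_algebra.
From mathcomp Require Import all_classical all_reals all_analysis.
Set Implicit Arguments. Unset Strict Implicit. Unset Printing Implicit Defensive.
Import Order.TTheory GRing.Theory Num.Theory.
Import numFieldNormedType.Exports.
Local Open Scope classical_set_scope.
Local Open Scope ring_scope.

Section Defs.
Context {R : realType} {d : nat}.

Definition eucl_norm (x : 'rV[R]_d) : R := Num.sqrt (\sum_(i < d) x ord0 i ^+ 2).

(** A real random variable Y is Gaussian: measurable, and its law is either
    a Dirac mass (degenerate Gaussian, variance 0) or N(m, s^2) with s > 0. *)
Definition gaussian_rv {d0} {Omega : measurableType d0} (P : probability Omega R)
  (Y : Omega -> R) : Prop :=
  measurable_fun setT Y /\
  exists (m s : R), 0 <= s /\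
    forall A : set R, measurable A ->
      P (Y @^-1` A) = (if s == 0 then \d_m A else normal_prob m s A).

Definition centered_isotropic_gaussian_field {d0} {Omega : measurableType d0}
  (P : probability Omega R) (X : 'rV[R]_d -> Omega -> R) (RX : R -> R) : Prop :=
  [/\ (forall n (ts : 'I_n -> 'rV[R]_d) (c : 'I_n -> R),
         gaussian_rv P (fun w => \sum_(i < n) c i * X (ts i) w)),
      (forall t, expectation P (X t) = 0%E),
      (forall s t, covariance P (X s) (X t) = (RX (eucl_norm (t - s)))%:E) &
      (forall w, continuous (fun t => X t w))].

Definition in_Pab (a b : 'rV[R]_d) (xi : R -> 'rV[R]_d) : Prop :=
  {within `[0%R, 1%R]%classic, continuous xi} /\ xi 0 = a /\ xi 1 = b.

(** Probability measures on [0,1], seen as Borel probabilities on R carried by [0,1]. *)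
Definition prob_on01 (mu : probability R R) : Prop := mu `[0%R, 1%R]%classic = 1%E.

Definition path_energy (RX : R -> R) (xi : R -> 'rV[R]_d) (mu : probability R R) : \bar R :=
  (\int[mu]_(u in `[0%R, 1%R]%classic)
     \int[mu]_(v in `[0%R, 1%R]%classic) (RX (eucl_norm (xi u - xi v)))%:E)%E.

(** min over mu in M_1^+([0,1]) of the path_energy (written as an infimum). *)
Definition min_path_energy (RX : R -> R) (xi : R -> 'rV[R]_d) : \bar R :=
  ereal_inf [set e | exists mu : probability R R, prob_on01 mu /\ e = path_energy RX xi mu].

Definition straight_path (a b : 'rV[R]_d) : R -> 'rV[R]_d := fun u => a + u *: (b - a).

End Defs.

From HB Require Import structures.
From mathcomp Require Import all_boot all_order all_algebra.
From mathcomp Require Import all_classical all_reals all_analysis.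
From mathcomp Require Import ring lra measurable_realfun.
Import Order.TTheory GRing.Theory Num.Theory.
Import numFieldNormedType.Exports.
Local Open Scope classical_set_scope.
Local Open Scope ring_scope.
Set Implicit Arguments. Unset Strict Implicit. Unset Printing Implicit Defensive.

(* Fix a path xi from a to b and put w := b - a.  The projection
   g u := <xi u - a, w> is continuous with g 0 = 0 and g 1 = |w|^2, so the
   first time tau v at which g reaches the level v |w|^2 is a nondecreasing
   reparametrization of [0,1] with g (tau v) = v |w|^2.  By Cauchy-Schwarz,
   |xi (tau v) - xi (tau v')| |w| >= |g (tau v) - g (tau v')| = |v - v'| |w|^2,
   so xi o tau is pointwise at least as spread out as the straight line.  As
   R_X is nonincreasing, the image nu of any mu under tau gives xi an energy
   no larger than the energy of the straight line under mu: minimizing over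
   measures, no path beats the straight line, which is itself in P(a,b). *)

Lemma sqr_sum_mul_le (R : realFieldType) (n : nat) (x y : 'I_n -> R) :
  (\sum_i x i * y i) ^+ 2 <= (\sum_i x i ^+ 2) * (\sum_i y i ^+ 2).
Proof.
set A := \sum_i x i ^+ 2; set B := \sum_i y i ^+ 2; set C := \sum_i x i * y i.
have A0 : 0 <= A by apply: sumr_ge0 => i _; exact: sqr_ge0.
have [A_eq0|A_neq0] := eqVneq A 0.
  have x0 i : x i = 0.
    apply/eqP; rewrite -sqrf_eq0; apply/eqP.
    exact: (psumr_eq0P (fun j _ => sqr_ge0 (x j)) A_eq0).
  by rewrite A_eq0 /C big1 ?expr0n ?mul0r // => i _; rewrite x0 mul0r.
have : 0 <= A * (A * B - C ^+ 2).
  have -> : A * (A * B - C ^+ 2) = \sum_i (A * y i - C * x i) ^+ 2.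
    rewrite (eq_bigr (fun i => A ^+ 2 * y i ^+ 2 - (2 * A * C) * (x i * y i)
       + C ^+ 2 * x i ^+ 2)); last by move=> i _; ring.
    rewrite !big_split /= sumrN -!mulr_sumr -/A -/B -/C; ring.
  by apply: sumr_ge0 => i _; exact: sqr_ge0.
by rewrite pmulr_rge0 ?lt_def ?A_neq0 ?A0 // subr_ge0.
Qed.

Lemma norm_sum_mul_le (R : rcfType) (n : nat) (x y : 'I_n -> R) :
  `|\sum_i x i * y i| <= Num.sqrt (\sum_i x i ^+ 2) * Num.sqrt (\sum_i y i ^+ 2).
Proof.
rewrite -sqrtrM; last by apply: sumr_ge0 => i _; exact: sqr_ge0.
rewrite -sqrtr_sqr ler_sqrt ?sqr_sum_mul_le //.
by apply: mulr_ge0; apply: sumr_ge0 => i _; exact: sqr_ge0.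
Qed.

Lemma normr_le_between (R : realDomainType) (lo hi x : R) :
  lo <= x -> x <= hi -> `|x| <= `|lo| + `|hi|.
Proof.
move=> lo_x x_hi; have := ler_norm hi; have := ler_norm (- lo).
have := normr_ge0 lo; have := normr_ge0 hi.
rewrite normrN => ? ? ? ?; rewrite ler_norml; apply/andP; split; lra.
Qed.

Lemma continuous_sum (R : numFieldType) (T : topologicalType) (I : Type)
    (s : seq I) (h : I -> T -> R^o) :
  (forall i, continuous (h i)) -> continuous (fun t => \sum_(i <- s) h i t).
Proof.
move=> h_cont; elim: s => [|j s IH].
  under eq_fun do rewrite big_nil; exact: cst_continuous.
under eq_fun do rewrite big_cons.
by move=> t; apply: continuousD; [exact: h_cont | exact: IH].
Qed.

Section Clamp.
Context {R : realType}.

Definition clamp01 (u : R) : R := Num.min (Num.max u 0) 1.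

Lemma clamp01_itv u : `[0, 1]%classic (clamp01 u).
Proof. by rewrite /= in_itv /= le_min ge_min le_max !lexx ler01 !orbT. Qed.

Lemma clamp01_id u : `[0, 1]%classic u -> clamp01 u = u.
Proof.
rewrite /= in_itv /= /clamp01 /Order.max /Order.min => /andP[? ?].
by case: (ltP u 0) => ?; case: ltP => ?; lra.
Qed.

Lemma clamp01_nondecreasing : {homo clamp01 : x y / x <= y}.
Proof.
move=> x y xy; rewrite /clamp01 /Order.max /Order.min.
by case: (ltP x 0) => ?; case: (ltP y 0) => ?; case: ltP => ?; case: ltP => ?; lra.
Qed.

Lemma clamp01_continuous : continuous clamp01.
Proof.
apply: min_fun_continuous; last exact: cst_continuous.
by apply: max_fun_continuous; [by move=> ?; exact: cvg_id | exact: cst_continuous].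
Qed.

End Clamp.

Section FirstHit.
Context {R : realType}.
Variable g : R -> R.

Definition hit_set (y : R) : set R := [set u | (0 <= u <= 1) /\ y <= g u].

Definition first_hit (y : R) : R := inf (hit_set y).

Lemma hit_set1 y : y <= g 1 -> hit_set y 1.
Proof. by split; first by rewrite ler01 lexx. Qed.

Lemma hit_set_lbound y : has_lbound (hit_set y).
Proof. by exists 0 => u [/andP[]]. Qed.

Lemma first_hit_itv y : y <= g 1 -> 0 <= first_hit y <= 1.
Proof.
move=> y_g1; apply/andP; split.
- by apply: lb_le_inf; [exists 1; exact: hit_set1 | move=> u [/andP[]]].
- exact: (ge_inf (hit_set_lbound y) (hit_set1 y_g1)).
Qed.

Lemma first_hit_le y y' : y <= y' -> y' <= g 1 -> first_hit y <= first_hit y'.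
Proof.
move=> yy' y'_g1; apply: lb_le_inf; first by exists 1; exact: hit_set1.
move=> u [u01 y'_gu]; apply: (ge_inf (hit_set_lbound y)).
by split => //; exact: le_trans y'_gu.
Qed.

Hypothesis g_cont : continuous g.

Lemma first_hitK y : g 0 <= y -> y <= g 1 -> g (first_hit y) = y.
Proof.
move=> g0_y y_g1; set t := first_hit y.
have /andP[t0 t1] := first_hit_itv y_g1.
have gt : g @ t --> g t by exact: g_cont.
apply/eqP; rewrite eq_le !leNgt; apply/andP; split; apply/negP => ineq.
- (* Just before t, g still exceeds y, against the minimality of t. *)
  have [e e0 near_t] := (nbhs_normP _ _).1 (cvgr_gt _ gt _ ineq).
  have {}e0 : 0 < e := e0.
  have t_gt0 : 0 < t.
    by rewrite lt_def t0 andbT; apply: contraTneq ineq => ->; rewrite -leNgt.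
  set s := Num.max (t - e / 2) 0.
  have s_lt_t : s < t by rewrite gt_max t_gt0 andbT; lra.
  have s_ge : t - e / 2 <= s by rewrite le_max lexx.
  have s_ge0 : 0 <= s by rewrite le_max lexx orbT.
  have /ltW gs : y < g s by apply: near_t; rewrite /ball_ /= gtr0_norm; lra.
  have : t <= s.
    by apply: (ge_inf (hit_set_lbound y)); split => //; apply/andP; split; lra.
  by rewrite leNgt s_lt_t.
- (* Points of the set just after t satisfy g >= y, hence so does t. *)
  have [e e0 near_t] := (nbhs_normP _ _).1 (cvgr_lt _ gt _ ineq).
  have {}e0 : 0 < e := e0.
  have [s s_hit s_lt] :=
    inf_adherent e0 (conj (ex_intro _ 1 (hit_set1 y_g1)) (hit_set_lbound y)).
  have t_le_s : t <= s := ge_inf (hit_set_lbound y) s_hit.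
  have gs_lt : g s < y.
    by apply: near_t; rewrite /ball_ /= distrC ger0_norm ?subr_ge0 //; lra.
  by case: s_hit => _; rewrite leNgt gs_lt.
Qed.

End FirstHit.

Section BoundedIntegrals.
Context {R : realType} {d : measure_display} {T : measurableType d}.
Variable mu : probability T R.

Lemma bounded_integrable (D : set T) (h : T -> \bar R) (C : R) :
  measurable D -> measurable_fun D h -> (forall x, D x -> (`|h x| <= C%:E)%E) ->
  mu.-integrable D h.
Proof.
move=> mD mh h_le; apply/integrableP; split => //.
apply: (le_lt_trans (@integral_le_bound _ _ _ mu D h `|C|%:E mD mh _ _)).
- by rewrite lee_fin.
- by apply: aeW => x Dx; apply: le_trans (h_le x Dx) _; rewrite lee_fin ler_norm.
by rewrite lte_mul_pinfty // (le_lt_trans (probability_le1 _ mD)) ?ltry.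
Qed.

Lemma abse_integral_le (D : set T) (h : T -> \bar R) (C : R) : 0 <= C ->
  measurable D -> measurable_fun D h -> (forall x, D x -> (`|h x| <= C%:E)%E) ->
  (`|\int[mu]_(x in D) h x| <= C%:E)%E.
Proof.
move=> C0 mD mh h_le; apply: le_trans (le_abse_integral _ mD mh) _.
apply: le_trans (@integral_le_bound _ _ _ mu D h C%:E mD mh _ _) _.
- by rewrite lee_fin.
- exact: aeW.
by rewrite -[leRHS]mule1 lee_pmul ?lee_fin ?probability_le1.
Qed.

Lemma integral_setT_prob1 (A : set T) (h : T -> \bar R) :
  measurable A -> mu A = 1%E -> measurable_fun setT h ->
  (\int[mu]_(x in setT) h x = \int[mu]_(x in A) h x)%E.
Proof.
move=> mA muA mh; have mAC : measurable (~` A) by exact: measurableC.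
rewrite -(setUv A) integral_setU ?setUv //; last first.
  by apply/disj_setPLR => x Ax /=; apply.
rewrite (@null_set_integral _ _ _ mu (~` A)) ?adde0 //.
- exact: measurable_funTS.
- by have := probability_setC mu mA; rewrite muA subee.
Qed.

End BoundedIntegrals.

Lemma measurable_partial_integral {R : realType} {d1 d2 : measure_display}
    {T1 : measurableType d1} {T2 : measurableType d2}
    (nu : {sigma_finite_measure set T2 -> \bar R}) (A : set T2) (G : T1 -> T2 -> R) :
  measurable A -> measurable_fun setT (fun p : T1 * T2 => G p.1 p.2) ->
  measurable_fun setT (fun x => (\int[nu]_(y in A) (G x y)%:E)%E).
Proof.
move=> mA mG; pose f (p : T1 * T2) := ((G p.1 p.2)%:E * (\1_A p.2)%:E)%E.
have mf : measurable_fun setT f.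
  apply: emeasurable_funM; first exact/measurable_EFinP.
  apply/measurable_EFinP; apply: measurableT_comp; last exact: measurable_snd.
  exact: measurable_indic.
(* Split into the positive and negative parts, each handled by Tonelli. *)
have -> : (fun x => \int[nu]_(y in A) (G x y)%:E)%E =
    (fun x => fubini_F nu (f^\+) x - fubini_F nu (f^\-) x)%E.
  apply: funext => x; rewrite integral_mkcond.
  have -> : ((fun y => (G x y)%:E) \_ A) = f \o pair x.
    apply: funext => y; rewrite /patch /f /=; case: ifPn => yA;
    by rewrite indicE ?yA ?(negbTE yA) /= ?mule1 ?mule0.
  by rewrite integralE funepos_comp funeneg_comp.
apply: emeasurable_funB; apply: measurable_fun_fubini_tonelli_F.
- exact: measurable_funepos.
- exact: funepos_ge0.
- exact: measurable_funeneg.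
- exact: funeneg_ge0.
Qed.

Section Energy01.
Context {R : realType}.
Local Notation I01 := (`[0%R, 1%R]%classic : set R).
Let mI01 : measurable I01 := measurable_itv _.

Definition energy01 (mu : probability R R) (F : R -> R -> R) : \bar R :=
  (\int[mu]_(u in I01) \int[mu]_(v in I01) (F u v)%:E)%E.

Section BoundedKernel.
Variables (F : R -> R -> R) (C : R).
Hypothesis mF : measurable_fun setT (fun p : R * R => F p.1 p.2).
Hypothesis F_le : forall u v, `|F u v| <= C.

Lemma measurable_kernel_slice x : measurable_fun setT (fun y => (F x y)%:E).
Proof.
by apply/measurable_EFinP; exact: (measurable_fun_pair2 (f := fun p : R * R => F p.1 p.2) x mF).
Qed.

Lemma integrable01_kernel_slice (nu : probability R R) x :
  nu.-integrable I01 (fun y => (F x y)%:E).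
Proof.
apply: (@bounded_integrable _ _ _ _ _ _ C) => //; last by move=> y _; rewrite lee_fin.
apply: measurable_funTS; exact: measurable_kernel_slice.
Qed.

Lemma abse_integral01_kernel_le (nu : probability R R) x :
  (`|\int[nu]_(y in I01) (F x y)%:E| <= C%:E)%E.
Proof.
apply: abse_integral_le => //; first exact: le_trans (normr_ge0 _) (F_le 0 0).
- apply: measurable_funTS; exact: measurable_kernel_slice.
- by move=> y _; rewrite lee_fin.
Qed.

Lemma integrable01_partial_integral (nu : probability R R) :
  nu.-integrable I01 (fun x => \int[nu]_(y in I01) (F x y)%:E)%E.
Proof.
apply: (@bounded_integrable _ _ _ _ _ _ C) => //.
- apply: measurable_funTS; exact: measurable_partial_integral.
- by move=> x _; exact: abse_integral01_kernel_le.
Qed.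

End BoundedKernel.

Lemma le_energy01 (mu : probability R R) (F G : R -> R -> R) (CF CG : R) :
  measurable_fun setT (fun p : R * R => F p.1 p.2) -> (forall u v, `|F u v| <= CF) ->
  measurable_fun setT (fun p : R * R => G p.1 p.2) -> (forall u v, `|G u v| <= CG) ->
  (forall u v, F u v <= G u v) -> (energy01 mu F <= energy01 mu G)%E.
Proof.
move=> mF F_le mG G_le FG; apply: le_integral.
- exact: measurable_itv.
- exact: integrable01_partial_integral mF F_le mu.
- exact: integrable01_partial_integral mG G_le mu.
move=> u _; apply: le_integral.
- exact: measurable_itv.
- exact: integrable01_kernel_slice mF F_le mu u.
- exact: integrable01_kernel_slice mG G_le mu u.
by move=> v _; rewrite lee_fin.
Qed.

Variable mu : probability R R.

Lemma integral01_distribution (tau : {mfun R >-> R}) (h : R -> \bar R) (C : R) :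
  prob_on01 mu -> (forall v, I01 (tau v)) ->
  measurable_fun setT h -> (forall u, (`|h u| <= C%:E)%E) ->
  (\int[distribution mu tau]_(u in I01) h u = \int[mu]_(v in I01) h (tau v))%E.
Proof.
move=> mu01 tau01 mh h_le.
rewrite [LHS](integral_pushforward (measurable_funPT tau)) //; set S := _ @^-1` _.
- have -> : S = setT by apply/seteqP; split => // v _; exact: tau01.
  by rewrite (integral_setT_prob1 mI01) //; exact: measurableT_comp mh (measurable_funPT tau).
- have -> : S = setT by apply/seteqP; split => // v _; exact: tau01.
  apply: (@bounded_integrable _ _ _ _ _ _ C) => //; last by move=> x _; exact: h_le.
  exact: (measurableT_comp mh (measurable_funPT tau)).
Qed.

Lemma energy01_distribution (tau : {mfun R >-> R}) (F : R -> R -> R) (C : R) :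
  prob_on01 mu -> (forall v, I01 (tau v)) ->
  measurable_fun setT (fun p : R * R => F p.1 p.2) -> (forall u v, `|F u v| <= C) ->
  energy01 (distribution mu tau) F = energy01 mu (fun v v' => F (tau v) (tau v')).
Proof.
move=> mu01 tau01 mF F_le; rewrite /energy01 (integral01_distribution (C := C)) //.
- apply: eq_integral => v _; rewrite (integral01_distribution (C := C)) //.
  + exact: measurable_kernel_slice.
  + by move=> u; rewrite lee_fin.
- exact: measurable_partial_integral.
- exact: abse_integral01_kernel_le.
Qed.

End Energy01.

Section EuclNorm.
Context {R : realType} {d : nat}.
Implicit Types x y : 'rV[R]_d.

Lemma eucl_norm_ge0 x : 0 <= eucl_norm x.
Proof. exact: sqrtr_ge0. Qed.

Lemma eucl_normZ (c : R) x : eucl_norm (c *: x) = `|c| * eucl_norm x.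
Proof.
rewrite /eucl_norm; under eq_bigr do rewrite mxE exprMn.
by rewrite -mulr_sumr sqrtrM ?sqr_ge0 // sqrtr_sqr.
Qed.

Lemma norm_dot_le x y :
  `|\sum_i x ord0 i * y ord0 i| <= eucl_norm x * eucl_norm y.
Proof. exact: norm_sum_mul_le. Qed.

Lemma eucl_normB_le x y : eucl_norm (x - y) <= eucl_norm x + eucl_norm y.
Proof.
have sum_ge0 z : 0 <= \sum_i z ord0 i ^+ 2 :> R.
  by apply: sumr_ge0 => i _; exact: sqr_ge0.
rewrite -[leRHS]ger0_norm ?addr_ge0 ?eucl_norm_ge0 // -sqrtr_sqr ler_sqrt ?sqr_ge0 //.
rewrite sqrrD !sqr_sqrtr //.
have -> : \sum_i (x - y) ord0 i ^+ 2 = \sum_i x ord0 i ^+ 2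
    - 2 * \sum_i x ord0 i * y ord0 i + \sum_i y ord0 i ^+ 2.
  rewrite mulr_sumr -sumrB -big_split /=; apply: eq_bigr => i _; rewrite !mxE; ring.
have := norm_dot_le x y; rewrite ler_norml => /andP[+ _].
rewrite /eucl_norm; lra.
Qed.

Lemma eucl_norm_continuous : continuous (@eucl_norm R d).
Proof.
move=> x; apply: continuous_comp; last exact: sqrt_continuous.
by apply: continuous_sum => i {}x; apply: continuousM; exact: coord_continuous.
Qed.

End EuclNorm.

Section ClampedPath.
Context {R : realType} {d : nat}.
Local Notation I01 := (`[0%R, 1%R]%classic : set R).
Variable xi : R -> 'rV[R]_d.

(* Extending a path beyond [0,1] by constants makes it continuous on all of R,
   which spares the restriction to [0,1] in continuity and measurability. *)
Definition clamped_path (u : R) : 'rV[R]_d := xi (clamp01 u).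

Hypothesis xi_cont : {within I01, continuous xi}.

Lemma clamped_path_continuous : continuous clamped_path.
Proof.
move=> u; have xi_cvg : xi @ within I01 (nbhs (clamp01 u)) --> xi (clamp01 u).
  by move/subspace_continuousP : xi_cont; apply; exact: clamp01_itv.
apply: cvg_comp xi_cvg => P P_near.
have : nbhs u (fun y => I01 (clamp01 y) -> P (clamp01 y)) := clamp01_continuous P_near.
by apply: filterS => y; apply; exact: clamp01_itv.
Qed.

Lemma clamped_path_coord_continuous i : continuous (fun u => clamped_path u ord0 i).
Proof.
move=> u; apply: (continuous_comp (g := fun M : 'rV[R]_d => M ord0 i)).
  exact: clamped_path_continuous.
exact: coord_continuous.
Qed.

Lemma clamped_path_bounded : exists M, forall u, eucl_norm (clamped_path u) <= M.
Proof.
have cont : {within `[0, 1], continuous (eucl_norm \o clamped_path)}.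
  apply: continuous_subspaceT => u; apply: continuous_comp.
    exact: clamped_path_continuous.
  exact: eucl_norm_continuous.
have [c _ c_max] := EVT_max ler01 cont.
exists (eucl_norm (clamped_path c)) => u.
have -> : clamped_path u = clamped_path (clamp01 u).
  by rewrite /clamped_path (clamp01_id (clamp01_itv u)).
by apply: c_max; exact: clamp01_itv.
Qed.

Lemma measurable_clamped_path_dist :
  measurable_fun setT (fun p : R * R => eucl_norm (clamped_path p.1 - clamped_path p.2)).
Proof.
apply: measurableT_comp; first exact: (continuous_measurable_fun (@sqrt_continuous R)).
apply: measurable_sum => i; apply: measurable_funX; rewrite /=.
under eq_fun do rewrite !mxE.
have m_coord : measurable_fun setT (fun u => clamped_path u ord0 i).
  by apply: continuous_measurable_fun; exact: clamped_path_coord_continuous.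
by apply: measurable_funB; [exact: measurableT_comp m_coord measurable_fst
                          | exact: measurableT_comp m_coord measurable_snd].
Qed.

End ClampedPath.

Section StraightPath.
Context {R : realType} {d : nat}.
Variables a b : 'rV[R]_d.

Lemma straight_path_in_Pab : in_Pab a b (straight_path a b).
Proof.
split; last by rewrite /straight_path scale0r addr0 scale1r addrC subrK.
apply: continuous_subspaceT => u; apply: cvgD; first exact: cvg_cst.
by apply: cvgZr_tmp; exact: cvg_id.
Qed.

Lemma eucl_norm_straight_path u v :
  eucl_norm (straight_path a b u - straight_path a b v) = `|u - v| * eucl_norm (b - a).
Proof. by rewrite /straight_path opprD addrACA subrr add0r -scalerBl eucl_normZ. Qed.

End StraightPath.

Section PathKernel.
Context {R : realType} {d : nat}.
Local Notation I01 := (`[0%R, 1%R]%classic : set R).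
Variable RX : R -> R.
Hypothesis RX_nonincr : forall x y : R, 0 <= x -> x <= y -> RX y <= RX x.

(* Only the values of RX on [0, +oo) matter; extending it by RX 0 to the left
   makes it nonincreasing, hence Borel, on all of R. *)
Definition RXpos (x : R) : R := RX (Num.max x 0).

Lemma RXpos_nonincreasing : {homo RXpos : x y /~ x <= y}.
Proof.
move=> x y xy; apply: RX_nonincr; rewrite /Order.max;
  case: (ltP x 0) => ?; case: (ltP y 0) => ?; lra.
Qed.

Definition path_kernel (xi : R -> 'rV[R]_d) (u v : R) : R :=
  RXpos (eucl_norm (clamped_path xi u - clamped_path xi v)).

Variable xi : R -> 'rV[R]_d.

Lemma path_energyE (mu : probability R R) :
  path_energy RX xi mu = energy01 mu (path_kernel xi).
Proof.
apply: eq_integral => u; rewrite inE => u01; apply: eq_integral => v; rewrite inE => v01.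
by rewrite /path_kernel /clamped_path !clamp01_id // /RXpos (max_idPl (eucl_norm_ge0 _)).
Qed.

Hypothesis xi_cont : {within I01, continuous xi}.

Lemma measurable_path_kernel :
  measurable_fun setT (fun p : R * R => path_kernel xi p.1 p.2).
Proof.
apply: measurableT_comp (measurable_clamped_path_dist xi_cont).
by apply: nonincreasing_measurable => // x y xy; exact: RXpos_nonincreasing.
Qed.

Lemma path_kernel_bounded : exists C, forall u v, `|path_kernel xi u v| <= C.
Proof.
have [M M_bound] := clamped_path_bounded xi_cont.
exists (`|RXpos (M + M)| + `|RXpos 0|) => u v.
apply: normr_le_between; apply: RXpos_nonincreasing.
- by apply: le_trans (eucl_normB_le _ _) _; exact: lerD.
- exact: eucl_norm_ge0.
Qed.

End PathKernel.

Section Reparametrization.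
Context {R : realType} {d : nat}.
Local Notation I01 := (`[0%R, 1%R]%classic : set R).
Variable RX : R -> R.
Hypothesis RX_nonincr : forall x y : R, 0 <= x -> x <= y -> RX y <= RX x.
Variables (a b : 'rV[R]_d) (xi : R -> 'rV[R]_d).
Hypothesis xi_Pab : in_Pab a b xi.

Definition proj_ba (u : R) : R :=
  \sum_i (clamped_path xi u ord0 i - a ord0 i) * (b - a) ord0 i.

Definition reparam (v : R) : R := first_hit proj_ba (clamp01 v * eucl_norm (b - a) ^+ 2).

Lemma proj_ba_continuous : continuous proj_ba.
Proof.
case: xi_Pab => xi_cont _; apply: continuous_sum => i u.
apply: cvgM; last exact: cvg_cst.
by apply: cvgB; [exact: clamped_path_coord_continuous | exact: cvg_cst].
Qed.

Lemma proj_ba0 : proj_ba 0 = 0.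
Proof.
case: xi_Pab => _ [xi0 _]; rewrite /proj_ba big1 // => i _.
by rewrite /clamped_path clamp01_id ?xi0 ?subrr ?mul0r // /= in_itv /= lexx ler01.
Qed.

Lemma proj_ba1 : proj_ba 1 = eucl_norm (b - a) ^+ 2.
Proof.
case: xi_Pab => _ [_ xi1].
rewrite /proj_ba sqr_sqrtr; last by apply: sumr_ge0 => i _; exact: sqr_ge0.
apply: eq_bigr => i _; rewrite /clamped_path clamp01_id ?xi1 /= ?in_itv /= ?lexx ?ler01 //.
by rewrite !mxE expr2.
Qed.

Lemma reparam_level v : 0 <= clamp01 v * eucl_norm (b - a) ^+ 2 <= proj_ba 1.
Proof.
have /andP[c0 c1] : 0 <= clamp01 v <= 1 by have := clamp01_itv v; rewrite /= in_itv.
rewrite proj_ba1 mulr_ge0 ?sqr_ge0 //= ler_piMl ?sqr_ge0 //.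
Qed.

Lemma reparam_itv v : I01 (reparam v).
Proof. by rewrite /= in_itv; apply: first_hit_itv; have /andP[] := reparam_level v. Qed.

Lemma reparam_nondecreasing : {homo reparam : v v' / v <= v'}.
Proof.
move=> v v' vv'; apply: first_hit_le; last by have /andP[] := reparam_level v'.
by apply: ler_wpM2r; [exact: sqr_ge0 | exact: clamp01_nondecreasing].
Qed.

Lemma proj_ba_reparam v : proj_ba (reparam v) = clamp01 v * eucl_norm (b - a) ^+ 2.
Proof.
have /andP[? ?] := reparam_level v.
by apply: first_hitK; [exact: proj_ba_continuous | rewrite proj_ba0 |].
Qed.

Lemma dist_reparam_ge v v' :
  `|clamp01 v - clamp01 v'| * eucl_norm (b - a) <=
    eucl_norm (clamped_path xi (reparam v) - clamped_path xi (reparam v')).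
Proof.
have w0 := eucl_norm_ge0 (b - a).
have dot_eq : proj_ba (reparam v) - proj_ba (reparam v') = \sum_i
    (clamped_path xi (reparam v) - clamped_path xi (reparam v')) ord0 i * (b - a) ord0 i.
  by rewrite /proj_ba -sumrB; apply: eq_bigr => i _; rewrite !mxE; ring.
have : `|clamp01 v - clamp01 v'| * eucl_norm (b - a) ^+ 2 <=
    eucl_norm (clamped_path xi (reparam v) - clamped_path xi (reparam v')) * eucl_norm (b - a).
  rewrite -(ger0_norm (sqr_ge0 (eucl_norm (b - a)))) -normrM mulrBl -!proj_ba_reparam dot_eq.
  exact: norm_dot_le.
have [->|w_neq0] := eqVneq (eucl_norm (b - a)) 0.
  by move=> _; rewrite mulr0; exact: eucl_norm_ge0.
by rewrite expr2 mulrA ler_pM2r // lt_def w_neq0 w0.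
Qed.

Lemma path_kernel_reparam_le v v' :
  path_kernel RX xi (reparam v) (reparam v') <= path_kernel RX (straight_path a b) v v'.
Proof.
apply: RXpos_nonincreasing => //.
by rewrite /clamped_path eucl_norm_straight_path; exact: dist_reparam_ge.
Qed.

Lemma measurable_reparam : measurable_fun setT reparam.
Proof. by apply: nondecreasing_measurable => // v v' vv'; exact: reparam_nondecreasing. Qed.

Lemma exists_energy_le (mu : probability R R) : prob_on01 mu ->
  exists2 nu : probability R R, prob_on01 nu &
    (path_energy RX xi nu <= path_energy RX (straight_path a b) mu)%E.
Proof.
move=> mu01.
pose tau : {mfun R >-> R} :=
  HB.pack reparam (isMeasurableFun.Build _ _ _ _ reparam measurable_reparam).
have reparam_pre : reparam @^-1` I01 = setT.
  by apply/seteqP; split => // v _; exact: reparam_itv.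
exists (distribution mu tau).
  by change (mu (reparam @^-1` I01) = 1%E); rewrite reparam_pre probability_setT.
case: xi_Pab => xi_cont _; have [line_cont _] := straight_path_in_Pab a b.
have [CF F_le] := path_kernel_bounded RX_nonincr xi_cont.
have [CG G_le] := path_kernel_bounded RX_nonincr line_cont.
have tau01 v : I01 (tau v) by exact: reparam_itv.
rewrite !path_energyE (energy01_distribution (C := CF) mu01 tau01
  (measurable_path_kernel RX_nonincr xi_cont) F_le).
apply: le_energy01.
- have m_pair : measurable_fun setT (fun p : R * R => (reparam p.1, reparam p.2)).
    by apply: measurable_fun_pair; apply: measurableT_comp measurable_reparam _;
      [exact: measurable_fst | exact: measurable_snd].
  exact: (measurableT_comp (measurable_path_kernel RX_nonincr xi_cont) m_pair).
- move=> u v; exact: F_le.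
- exact: (measurable_path_kernel RX_nonincr line_cont).
- exact: G_le.
- exact: path_kernel_reparam_le.
Qed.

End Reparametrization.

Unset Implicit Arguments.

Theorem proposition8p4 (R : realType) (d : nat) (d0 : measure_display)
  (Omega : measurableType d0) (P : probability Omega R)
  (X : 'rV[R]_d -> Omega -> R) (RX : R -> R) :
  centered_isotropic_gaussian_field P X RX ->
  (forall x y : R, 0 <= x -> x <= y -> RX y <= RX x) ->
  forall a b : 'rV[R]_d,
    in_Pab a b (straight_path a b) /\
    min_path_energy RX (straight_path a b) =
      ereal_sup [set min_path_energy RX xi | xi in [set xi | in_Pab a b xi]].
Proof.
(* The optimization problem depends on the field X only through R_X. *)
move=> _ RX_nonincr a b; split; first exact: straight_path_in_Pab.
apply/eqP; rewrite eq_le; apply/andP; split.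
  by apply: ereal_sup_ubound; exists (straight_path a b) => //; exact: straight_path_in_Pab.
apply: ge_ereal_sup => _ [xi xi_Pab <-].
apply: le_ereal_inf_tmp => _ [mu [mu01 ->]].
have [nu nu01 le_nu_mu] := exists_energy_le RX_nonincr xi_Pab mu01.
by apply: le_trans le_nu_mu; apply: ereal_inf_lbound; exists nu.
Qed.
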